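(* Let $n\ge1$ and let $\mathbf d=(d_1<\dots<d_s)$ with $1\le d_1$, $d_s\le n$. Then the set of Bruhat polytopes $\{Q^{\mathbf d}_{u,v}:[u,v]\in\operatorname{BI}(\mathbf d,n)\}$ equals the set of twisted Bruhat polytopes $\{\widetilde Q^{\mathbf d}_{u,v}:[u,v]\in\widetilde{\operatorname{BI}}(\mathbf d,n)\}$.
   Context: $\operatorname{Sym}_n$ carries the Bruhat order: $u\le v$ iff some (equivalently every) reduced word for $v$ in the adjacent transpositions $\tau_i=(i,i+1)$ contains a subword that is a word for $u$. For $B\subseteq[n]$, $e_B=\sum_{i\in B}e_i$. Untwisted: for $x\in\operatorname{Sym}_n$ let $\pi^{\mathbf d}\phi(x)\in\mathbb{R}^n$ be the vector whose $k$-th coordinate is $\#\{j: x(k)\ge n+1-d_j\}$ (the image of the permutahedron vertex $(x(1),\dots,x(n))$). $\operatorname{BI}(\mathbf d,n)$ is the set of Bruhat intervals $[u,v]$ such that $v$ is Bruhat-minimal among all $x$ with $\pi^{\mathbf d}\phi(x)=\pi^{\mathbf d}\phi(v)$, and $Q^{\mathbf d}_{u,v}=\operatorname{conv}\{\pi^{\mathbf d}\phi(x):x\in[u,v]\}$. Twisted: for $x\in\operatorname{Sym}_n$ let $\pi^{\mathbf d}\psi(x)=e_{x([d_1])}+\dots+e_{x([d_s])}$ (the image of the vertex $x\cdot(n,n-1,\dots,1)$ of the permutahedron, where $(x\cdot y)_i=y_{x^{-1}(i)}$). $\widetilde{\operatorname{BI}}(\mathbf d,n)$ is the set of Bruhat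 intervals $[u,v]$ such that $v$ is Bruhat-minimal among all $x$ with $\pi^{\mathbf d}\psi(x)=\pi^{\mathbf d}\psi(v)$, and $\widetilde Q^{\mathbf d}_{u,v}=\operatorname{conv}\{\pi^{\mathbf d}\psi(x):x\in[u,v]\}$. *)

From HB Require Import structures.
From mathcomp Require Import all_boot all_order all_fingroup all_algebra.
From mathcomp Require Import reals.
Set Implicit Arguments. Unset Strict Implicit. Unset Printing Implicit Defensive.
Import Order.TTheory GRing.Theory Num.Theory.
Local Open Scope ring_scope.

(* Conventions: [n] = 'I_n (0-indexed); Sym_n = 'S_n = {perm 'I_n}.
   The 1-indexed value x(k) of the paper is (val (x k)).+1 here. *)

(* adjacent transposition tau_i = (i, i+1) (0-indexed); identity if i+1 = n *)
Definition adj (n : nat) (i : 'I_n) : 'S_n :=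
  match (insub i.+1 : option 'I_n) with Some j => tperm i j | None => 1%g end.

Definition valid_letter (n : nat) (i : 'I_n) : bool := (i.+1 < n)%N.

Definition prodw (n : nat) (w : seq 'I_n) : 'S_n := (\prod_(i <- w) adj i)%g.

Definition word_for (n : nat) (w : seq 'I_n) (v : 'S_n) : Prop :=
  all (@valid_letter n) w /\ prodw w = v.

Definition reduced_word (n : nat) (w : seq 'I_n) (v : 'S_n) : Prop :=
  word_for w v /\ (forall w', word_for w' v -> (size w <= size w')%N).

Definition bruhat_le (n : nat) (u v : 'S_n) : Prop :=
  exists w, reduced_word w v /\ exists w', subseq w' w /\ word_for w' u.

Definition in_interval (n : nat) (u v x : 'S_n) : Prop :=
  bruhat_le u x /\ bruhat_le x v.

(* (pi^d phi(x))_k = #{ j : x(k) >= n+1-d_j }  (1-indexed x(k) = val (x k) + 1) *)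
Definition piphi (n : nat) (d : seq nat) (x : 'S_n) (k : 'I_n) : nat :=
  count (fun dj => n - dj <= val (x k))%N d.

(* pi^d psi(x) = e_{x([d_1])} + ... + e_{x([d_s])}; coordinate i counts the
   j with i \in x([d_j]), i.e. x^{-1}(i) < d_j (0-indexed). *)
Definition pipsi (n : nat) (d : seq nat) (x : 'S_n) (i : 'I_n) : nat :=
  count (fun dj => val ((x^-1)%g i) < dj)%N d.

Definition BI (n : nat) (d : seq nat) (u v : 'S_n) : Prop :=
  bruhat_le u v /\
  (forall x : 'S_n, piphi d x =1 piphi d v -> bruhat_le x v -> x = v).

Definition tBI (n : nat) (d : seq nat) (u v : 'S_n) : Prop :=
  bruhat_le u v /\
  (forall x : 'S_n, pipsi d x =1 pipsi d v -> bruhat_le x v -> x = v).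

Definition conv_interval (R : realType) (n : nat) (f : 'S_n -> 'I_n -> nat)
    (u v : 'S_n) (p : 'rV[R]_n) : Prop :=
  exists lam : 'S_n -> R,
    [/\ forall x, 0 <= lam x,
        forall x, ~ in_interval u v x -> lam x = 0,
        \sum_x lam x = 1
      & p = \sum_x lam x *: \row_k ((f x k)%:R : R)].

Definition Q (R : realType) (n : nat) (d : seq nat) (u v : 'S_n) :=
  @conv_interval R n (piphi d) u v.

Definition tQ (R : realType) (n : nat) (d : seq nat) (u v : 'S_n) :=
  @conv_interval R n (pipsi d) u v.

Arguments Q R {n} d u v p.
Arguments tQ R {n} d u v p.

(* The map x |-> (x w0)^-1 reverses Bruhat order and turns the twisted vertex
   map psi into phi, so it carries the points of an interval [u, v] with their
   phi-images onto the points of [(v w0)^-1, (u w0)^-1] with the same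
   psi-images, and back.  It therefore suffices to replace any interval by one
   with the same image whose top is Bruhat-minimal in its fiber, for phi and
   for psi separately.  Both vertex maps factor through x |-> (L(x(k)))_k for
   a monotone L (for psi, applied to x^-1, and inversion preserves Bruhat
   order).  If v has a descent s_i with L(i) = L(i+1), then right
   multiplication by s_i does not change the image, and the lifting property
   shows that [u, v] and [u', v s_i] (u' = u or u s_i) have the same image.
   Induction on the length of v leads to a v with an ascent at every such i,
   and such a v is the unique minimal element of its fiber. *)

From HB Require Import structures.
From mathcomp Require Import all_boot all_order all_fingroup all_algebra.
From mathcomp Require Import reals boolp zify.
Set Implicit Arguments. Unset Strict Implicit. Unset Printing Implicit Defensive.
Import GRing.Theory Num.Theory.

Lemma subseq_rcons_cases (T : eqType) (s' s : seq T) (x : T) :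
  subseq s' (rcons s x) ->
  subseq s' s \/ exists2 s'', s' = rcons s'' x & subseq s'' s.
Proof.
rewrite -subseq_rev rev_rcons; case/lastP: s' => [_|s'' y].
  by left; exact: sub0seq.
rewrite rev_rcons /=; case: eqP => [-> | _] sub_s.
  by right; exists s'' => //; rewrite -subseq_rev.
by left; rewrite -subseq_rev rev_rcons.
Qed.

Lemma sum2_delta (T : finType) (F : T -> T -> nat) (p q : T) :
  \sum_a \sum_b (((a == p) && (b == q)) * F a b) = F p q.
Proof.
rewrite (bigD1 p) //= (bigD1 q) //= !eqxx mul1n !big1 ?addn0 // => [a|b].
- by move=> /negbTE ne_ap; apply: big1 => b _; rewrite ne_ap.
- by move=> /negbTE->.
Qed.

Lemma sum2_shift (T : finType) (F1 F2 G : T -> T -> nat) (p q p' q' : T) :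
  (forall a b, F1 a b + ((a == p) && (b == q)) * G a b =
               F2 a b + ((a == p') && (b == q')) * G a b) ->
  \sum_a \sum_b F1 a b + G p q = \sum_a \sum_b F2 a b + G p' q'.
Proof.
move=> eqF; rewrite -(sum2_delta G p q) -(sum2_delta G p' q') -!big_split.
by apply: eq_bigr => a _; rewrite -!big_split; apply: eq_bigr => b _; exact: eqF.
Qed.

Section Tableau.
Variable n : nat.
Implicit Types (x y u v : 'S_n) (i : 'I_n).

Definition invn x (a : nat) : nat :=
  if insub a is Some o then val ((x^-1)%g o) else a.

Lemma invnE x (o : 'I_n) : invn x o = (x^-1)%g o.
Proof. by rewrite /invn valK. Qed.

Lemma invn_out x a : n <= a -> invn x a = a.
Proof. by move=> le_na; rewrite /invn insubF // ltnNge le_na. Qed.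

Lemma invn_lt x a : a < n -> invn x a < n.
Proof. by move=> lt_an; rewrite (invnE x (Ordinal lt_an)). Qed.

Lemma invn_inj x a b : a < n -> b < n -> invn x a = invn x b -> a = b.
Proof.
move=> lt_an lt_bn; rewrite (invnE x (Ordinal lt_an)) (invnE x (Ordinal lt_bn)).
by move/val_inj/perm_inj/(congr1 val).
Qed.

Lemma invn1 a : invn 1%g a = a.
Proof.
case: (ltnP a n) => [lt_an|]; last exact: invn_out.
by rewrite (invnE _ (Ordinal lt_an)) invg1 perm1.
Qed.

Definition swapn (k a : nat) : nat :=
  if a == k then k.+1 else if a == k.+1 then k else a.

Lemma adj_tperm i (lt_in : i.+1 < n) : adj i = tperm i (Ordinal lt_in).
Proof. by rewrite /adj insubT /=; congr tperm; apply: val_inj. Qed.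

Lemma adj_val i (lt_in : i.+1 < n) (o : 'I_n) : val (adj i o) = swapn i o.
Proof.
rewrite adj_tperm /swapn; case: tpermP => [->|->|ne_oi ne_oi1] /=.
- by rewrite eqxx.
- by rewrite ifN ?eqxx //; apply/eqP; lia.
rewrite !ifN //; apply/eqP => eq_o; [apply: ne_oi1 | apply: ne_oi]; exact: val_inj.
Qed.

Lemma adjK i : (adj i * adj i = 1)%g.
Proof. by rewrite /adj; case: insubP => [j _ _|_]; [exact: tperm2 | exact: mulg1]. Qed.

Lemma adjV i : ((adj i)^-1)%g = adj i.
Proof. by rewrite /adj; case: insubP => [j _ _|_]; [exact: tpermV | exact: invg1]. Qed.

Lemma mul_adjK x i : (x * adj i * adj i)%g = x.
Proof. by rewrite -mulgA adjK mulg1. Qed.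

Lemma invn_mul_adj x i a : i.+1 < n -> invn (x * adj i)%g a = invn x (swapn i a).
Proof.
move=> lt_in; case: (ltnP a n) => [lt_an|le_na]; last first.
  by rewrite !invn_out // /swapn !ifN //; apply/eqP; lia.
rewrite (invnE _ (Ordinal lt_an)) invgM adjV permM.
by rewrite -(adj_val lt_in (Ordinal lt_an)) invnE.
Qed.

(* Tableau criterion: Bruhat order is the pointwise order of these counts. *)
Definition tab x (k j : nat) : nat := \sum_(0 <= a < k) ((a < n) && (j <= invn x a)).

Definition tab_le u v : Prop := forall k j, tab u k j <= tab v k j.

Lemma tab0 x j : tab x 0 j = 0.
Proof. by rewrite /tab big_geq. Qed.

Lemma tabS x (k j : nat) : tab x k.+1 j = tab x k j + ((k < n) && (j <= invn x k)).
Proof. by rewrite /tab big_nat_recr. Qed.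

Lemma tabS_lt x (k j : nat) : k < n -> tab x k.+1 j = tab x k j + (j <= invn x k).
Proof. by move=> lt_kn; rewrite tabS lt_kn. Qed.

Lemma tab_mul_adj x i k j : i.+1 < n ->
  tab (x * adj i)%g k j =
    if k == i.+1 then tab x i j + (j <= invn x i.+1) else tab x k j.
Proof.
move=> lt_in; elim: k => [|k IHk]; first by rewrite !tab0.
rewrite tabS IHk invn_mul_adj // /swapn.
case: (ltngtP k i) => [lt_ki|lt_ik|->]; last by rewrite eqxx ltn_ord ifN //; lia.
- by rewrite !ifN ?tabS //; apply/eqP; lia.
- case: (eqVneq k i.+1) => [->|ne_ki1]; last by rewrite !ifN ?tabS //; apply/eqP; lia.
  rewrite ifN; last by apply/eqP; lia.
  by rewrite lt_in !tabS_lt //; lia.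
Qed.

Lemma tab_le_refl x : tab_le x x. Proof. by []. Qed.

Lemma tab_le_trans y x z : tab_le x y -> tab_le y z -> tab_le x z.
Proof. by move=> le_xy le_yz k j; exact: leq_trans (le_xy k j) (le_yz k j). Qed.

Lemma tab_le_anti x y : tab_le x y -> tab_le y x -> x = y.
Proof.
move=> le_xy le_yx; apply: invg_inj; apply/permP => o; apply/val_inj => /=.
rewrite -!invnE.
have tabE j : tab x o.+1 j = tab y o.+1 j by apply/eqP; rewrite eqn_leq le_xy le_yx.
have tabE' j : tab x o j = tab y o j by apply/eqP; rewrite eqn_leq le_xy le_yx.
have leE j : (j <= invn x o) = (j <= invn y o).
  move: (tabE j); rewrite !(tabS_lt _ _ (ltn_ord o)) tabE'.
  by case: (leqP j (invn x o)); case: (leqP j (invn y o)); lia.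
by apply/eqP; rewrite eqn_leq -leE leqnn leE leqnn.
Qed.

(* As [(x * t) k = t (x k)], right multiplication by [adj i] swaps the values
   i and i+1, and it lengthens x exactly when [asc x i]. *)
Definition asc x (k : nat) : bool := invn x k < invn x k.+1.

Lemma asc_mul_adj x i : i.+1 < n -> asc (x * adj i)%g i = ~~ asc x i.
Proof.
move=> lt_in; rewrite /asc !invn_mul_adj // /swapn eqxx ifN ?eqxx; last first.
  by apply/eqP; lia.
have: invn x i != invn x i.+1 by apply/eqP => /invn_inj; lia.
lia.
Qed.

Section AdjacentStep.
Variables (i : 'I_n) (lt_in : i.+1 < n).
Let s := adj i.
Let lt_i : i < n := ltn_ord i.

Lemma tab_le_rows u v j : tab_le u v ->
  [/\ tab u i j <= tab v i j,
      tab u i j + (j <= invn u i) <= tab v i j + (j <= invn v i) &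
      tab u i j + (j <= invn u i) + (j <= invn u i.+1) <=
      tab v i j + (j <= invn v i) + (j <= invn v i.+1)].
Proof.
move=> le_uv; have := le_uv i j; have := le_uv i.+1 j; have := le_uv i.+2 j.
by rewrite !(tabS_lt _ _ lt_in) !(tabS_lt _ _ lt_i).
Qed.

Lemma tab_le_mul_adj_asc u v : asc v i -> tab_le u v -> tab_le (u * s)%g (v * s)%g.
Proof.
rewrite /asc => asc_v le_uv k j; rewrite !tab_mul_adj //.
case: eqP => _; last exact: le_uv.
case: (tab_le_rows j le_uv); case: (j <= invn u i); case: (j <= invn u i.+1);
  case: (leqP j (invn v i)); case: (leqP j (invn v i.+1)) => //=; lia.
Qed.

Lemma tab_le_mul_adj_desc u v :
  ~~ asc v i -> ~~ asc u i -> tab_le u v -> tab_le (u * s)%g (v * s)%g.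
Proof.
rewrite /asc => desc_v desc_u le_uv k j; rewrite !tab_mul_adj //.
case: eqP => _; last exact: le_uv.
case: (tab_le_rows j le_uv); case: (leqP j (invn u i)); case: (leqP j (invn u i.+1));
  case: (leqP j (invn v i)); case: (leqP j (invn v i.+1)) => //=; lia.
Qed.

Lemma tab_le_mul_adjr u v : ~~ asc v i -> asc u i -> tab_le u v -> tab_le u (v * s)%g.
Proof.
rewrite /asc => desc_v asc_u le_uv k j; rewrite !tab_mul_adj //.
case: eqP => [->|_]; last exact: le_uv.
rewrite (tabS_lt _ _ lt_i).
case: (tab_le_rows j le_uv); case: (leqP j (invn u i)); case: (leqP j (invn u i.+1));
  case: (leqP j (invn v i)); case: (leqP j (invn v i.+1)) => //=; lia.
Qed.

Lemma tab_le_mul_adj x : asc x i -> tab_le x (x * s)%g.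
Proof.
rewrite /asc => asc_x k j; rewrite !tab_mul_adj //; case: eqP => [->|_] //.
rewrite (tabS_lt _ _ lt_i).
by case: (leqP j (invn x i)); case: (leqP j (invn x i.+1)); lia.
Qed.

Lemma tab_le_mul_adjV x : ~~ asc x i -> tab_le (x * s)%g x.
Proof.
by rewrite -(asc_mul_adj _ lt_in) => /tab_le_mul_adj; rewrite mul_adjK.
Qed.

End AdjacentStep.

End Tableau.

Section BruhatTableau.
Variable n : nat.
Implicit Types (x y u v : 'S_n) (i : 'I_n) (w : seq 'I_n).

Definition ninv x : nat :=
  \sum_(a : 'I_n) \sum_(b : 'I_n) ((a < b) * ((x^-1)%g b < (x^-1)%g a)).

Lemma ltn_swapn (k a b : nat) :
  (swapn k a < swapn k b) + ((a == k) && (b == k.+1)) =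
  (a < b) + ((a == k.+1) && (b == k)).
Proof.
rewrite /swapn; case: (eqVneq a k) => [->|ne_ak]; case: (eqVneq b k) => [->|ne_bk];
  rewrite ?eqxx /=; try case: (eqVneq b k.+1) => [->|ne_bk1];
  try case: (eqVneq a k.+1) => [->|ne_ak1]; rewrite ?eqxx /= ?andbF ?andbT; lia.
Qed.

Lemma ninv_mul_adj x i : i.+1 < n -> asc x i -> ninv (x * adj i)%g = (ninv x).+1.
Proof.
move=> lt_in; rewrite /asc (invnE x i) (invnE x (Ordinal lt_in)) => asc_x.
set s := adj i; have sK o : s (s o) = o by rewrite -permM adjK perm1.
rewrite /ninv (reindex_inj (@perm_inj _ s)).
under eq_bigr => a _ do rewrite (reindex_inj (@perm_inj _ s)).
have shift (a b : 'I_n) :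
    (s a < s b) * (((x * s)^-1)%g (s b) < ((x * s)^-1)%g (s a)) +
    ((a == i) && (b == Ordinal lt_in)) * ((x^-1)%g b < (x^-1)%g a) =
    (a < b) * ((x^-1)%g b < (x^-1)%g a) +
    ((a == Ordinal lt_in) && (b == i)) * ((x^-1)%g b < (x^-1)%g a).
  rewrite invgM adjV !permM !sK -!mulnDl !adj_val //; congr (_ * _).
  exact: ltn_swapn.
by have := sum2_shift shift; rewrite /= ltnNge (ltnW asc_x) asc_x addn0 addn1.
Qed.

Lemma ninv_mul_adjV x i : i.+1 < n -> ~~ asc x i -> ninv x = (ninv (x * adj i)%g).+1.
Proof.
move=> lt_in; rewrite -(asc_mul_adj _ lt_in) => /(ninv_mul_adj lt_in).
by rewrite mul_adjK.
Qed.

Lemma ninv1 : ninv (1 : 'S_n) = 0.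
Proof.
by apply: big1 => a _; apply: big1 => b _; rewrite invg1 !perm1; case: ltngtP.
Qed.

Lemma perm1_of_invn_le x : (forall a, a < n -> invn x a <= a) -> x = 1%g.
Proof.
move=> le_x; have invn_id a : a < n -> invn x a = a.
  elim/ltn_ind: a => a IHa lt_an; move: (le_x a lt_an); rewrite leq_eqVlt.
  case/orP => [/eqP //|lt_xa]; have lt_xan := invn_lt x lt_an.
  by move: (IHa _ lt_xa lt_xan) => /invn_inj-/(_ lt_xan lt_an); lia.
apply: invg_inj; apply/permP => o; apply/val_inj => /=.
by rewrite invg1 perm1 -invnE invn_id.
Qed.

Lemma perm1_of_asc x : (forall a, a.+1 < n -> asc x a) -> x = 1%g.
Proof.
move=> asc_x; apply: perm1_of_invn_le => a lt_an.
have [k] := ubnP (n - a); elim: k a lt_an => // k IHk a lt_an lt_k.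
case: (ltnP a.+1 n) => [lt_a1n|]; last by have := invn_lt x lt_an; lia.
by have := IHk _ lt_a1n (ltac:(lia)); have := asc_x a lt_a1n; rewrite /asc; lia.
Qed.

Lemma exists_desc x : x != 1%g -> exists2 i : 'I_n, i.+1 < n & ~~ asc x i.
Proof.
move=> ne_x1; have [i /andP[lt_in desc_x] | no_desc] :=
  pickP [pred i : 'I_n | (i.+1 < n) && ~~ asc x i]; first by exists i.
case/eqP: ne_x1; apply: perm1_of_asc => a lt_a1n; have lt_an : a < n by lia.
by move: (no_desc (Ordinal lt_an)) => /= /negbT; rewrite lt_a1n negbK.
Qed.

Lemma prodw_nil : prodw ([::] : seq 'I_n) = 1%g.
Proof. exact: big_nil. Qed.

Lemma prodw_rcons w i : prodw (rcons w i) = (prodw w * adj i)%g.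
Proof. exact: big_rcons. Qed.

Lemma word_for_nil : word_for [::] (1 : 'S_n).
Proof. by split; last exact: prodw_nil. Qed.

Lemma word_for_rcons w i x :
  i.+1 < n -> word_for w x -> word_for (rcons w i) (x * adj i)%g.
Proof.
by move=> lt_in [all_w <-]; rewrite /word_for all_rcons all_w andbT prodw_rcons.
Qed.

Lemma ninv_le_size w v : word_for w v -> ninv v <= size w.
Proof.
elim/last_ind: w v => [|w i IHw] v [all_w <-]; first by rewrite prodw_nil ninv1.
move: all_w; rewrite all_rcons => /andP[lt_in all_w].
rewrite prodw_rcons size_rcons; have := IHw _ (conj all_w erefl).
have [asc_w | desc_w] := boolP (asc (prodw w) i).
  by rewrite (ninv_mul_adj lt_in asc_w).
by rewrite (ninv_mul_adjV lt_in desc_w); lia.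
Qed.

Lemma exists_word v : exists2 w, word_for w v & size w = ninv v.
Proof.
have [k] := ubnP (ninv v); elim: k v => // k IHk v lt_vk.
have [->|ne_v1] := eqVneq v 1%g.
  by exists [::]; rewrite ?ninv1 //; exact: word_for_nil.
have [i lt_in desc_v] := exists_desc ne_v1.
have ninvE := ninv_mul_adjV lt_in desc_v.
have [w w_vs size_w] := IHk (v * adj i)%g (ltac:(lia)).
exists (rcons w i); last by rewrite size_rcons size_w ninvE.
by have := word_for_rcons lt_in w_vs; rewrite mul_adjK.
Qed.

Lemma reduced_wordP w v : reduced_word w v <-> word_for w v /\ size w = ninv v.
Proof.
split=> [[w_v min_w] | [w_v size_w]].
  split=> //; apply/eqP; rewrite eqn_leq ninv_le_size // andbT.
  by have [w' w'_v <-] := exists_word v; exact: min_w.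
by split=> // w' /ninv_le_size; rewrite size_w.
Qed.

Lemma reduced_rcons w i v : reduced_word (rcons w i) v ->
  [/\ i.+1 < n, asc (prodw w) i, reduced_word w (prodw w) & v = (prodw w * adj i)%g].
Proof.
move=> /reduced_wordP[[all_w <-] size_w]; move: all_w size_w.
rewrite all_rcons prodw_rcons size_rcons => /andP[lt_in all_w] size_w.
have le_w := ninv_le_size (conj all_w (erefl (prodw w))).
have [asc_w | desc_w] := boolP (asc (prodw w) i); last first.
  by move: size_w le_w; rewrite (ninv_mul_adjV lt_in desc_w); lia.
split=> //; apply/reduced_wordP; split=> //.
by move: size_w; rewrite (ninv_mul_adj lt_in asc_w); lia.
Qed.

Lemma bruhat_tab_le u v : bruhat_le u v -> tab_le u v.
Proof.
case=> w [red_w [w' [sub_w [all_w' <-]]]].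
elim/last_ind: w v w' red_w sub_w all_w' => [|w i IHw] v w' red_w sub_w all_w'.
  move: sub_w; rewrite subseq0 => /eqP->.
  by case: red_w => -[_ <-] _; exact: tab_le_refl.
have [lt_in asc_w red_w' ->] := reduced_rcons red_w.
case: (subseq_rcons_cases sub_w) => [sub_w'|[w'' eq_w' sub_w'']]; last subst w'.
  exact: tab_le_trans (IHw _ _ red_w' sub_w' all_w') (tab_le_mul_adj lt_in asc_w).
move: all_w'; rewrite all_rcons prodw_rcons => /andP[_ all_w''].
exact: tab_le_mul_adj_asc (IHw _ _ red_w' sub_w'' all_w'').
Qed.

Lemma tab_le1 u : tab_le u 1 -> u = 1%g.
Proof.
move=> le_u1; apply: perm1_of_invn_le => a lt_an; move: (le_u1 a.+1 a.+1).
have -> : tab (1 : 'S_n) a.+1 a.+1 = 0.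
  rewrite /tab; apply: big1_seq => b; rewrite /= mem_index_iota invn1 => /andP[_ lt_ba].
  by rewrite (_ : a.+1 <= b = false) ?andbF //; lia.
by rewrite (tabS_lt _ _ lt_an); lia.
Qed.

Lemma tab_le_bruhat u v : tab_le u v -> bruhat_le u v.
Proof.
have [k] := ubnP (ninv v); elim: k u v => // k IHk u v lt_vk le_uv.
have [v1|ne_v1] := eqVneq v 1%g.
  rewrite v1 in le_uv *; rewrite (tab_le1 le_uv); exists [::]; split.
    by apply/reduced_wordP; rewrite ninv1; split=> //; exact: word_for_nil.
  by exists [::]; split=> //; exact: word_for_nil.
have [i lt_in desc_v] := exists_desc ne_v1.
have ninvE := ninv_mul_adjV lt_in desc_v.
have red_rcons w : reduced_word w (v * adj i)%g -> reduced_word (rcons w i) v.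
  case/reduced_wordP=> w_vs size_w; apply/reduced_wordP; rewrite size_rcons size_w ninvE.
  by have := word_for_rcons lt_in w_vs; rewrite mul_adjK.
have [asc_u | desc_u] := boolP (asc u i).
  have [w [red_w [w' [sub_w w'_u]]]] :=
    IHk u (v * adj i)%g (ltac:(lia)) (tab_le_mul_adjr lt_in desc_v asc_u le_uv).
  exists (rcons w i); split; first exact: red_rcons.
  by exists w'; split=> //; apply: subseq_trans sub_w (subseq_rcons _ _).
have [w [red_w [w' [sub_w w'_us]]]] :=
  IHk (u * adj i)%g (v * adj i)%g (ltac:(lia))
    (tab_le_mul_adj_desc lt_in desc_v desc_u le_uv).
exists (rcons w i); split; first exact: red_rcons.
exists (rcons w' i); split; first by rewrite -!cats1 subseq_cat2r.
by have := word_for_rcons lt_in w'_us; rewrite mul_adjK.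
Qed.

Lemma bruhatE u v : bruhat_le u v <-> tab_le u v.
Proof. by split; [exact: bruhat_tab_le | exact: tab_le_bruhat]. Qed.

End BruhatTableau.

Section Symmetries.
Variable n : nat.
Implicit Types (x y u v : 'S_n) (w : seq 'I_n).

Lemma prodw_rev w : prodw (rev w) = ((prodw w)^-1)%g.
Proof.
elim/last_ind: w => [|w i IHw]; first by rewrite prodw_nil invg1.
by rewrite rev_rcons prodw_rcons invgM adjV /prodw big_cons -IHw.
Qed.

Lemma word_for_rev w v : word_for w v -> word_for (rev w) (v^-1)%g.
Proof. by case=> all_w <-; rewrite /word_for all_rev prodw_rev. Qed.

Lemma reduced_word_rev w v : reduced_word w v -> reduced_word (rev w) (v^-1)%g.
Proof.
case=> w_v min_w; split=> [|w' /word_for_rev]; first exact: word_for_rev.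
by rewrite invgK => /min_w; rewrite !size_rev.
Qed.

Lemma bruhat_le_inv u v : bruhat_le u v -> bruhat_le (u^-1)%g (v^-1)%g.
Proof.
case=> w [red_w [w' [sub_w w'_u]]]; exists (rev w); split; first exact: reduced_word_rev.
by exists (rev w'); split; [rewrite subseq_rev | exact: word_for_rev].
Qed.

Lemma bruhat_le_invE u v : bruhat_le (u^-1)%g (v^-1)%g <-> bruhat_le u v.
Proof. by split=> /bruhat_le_inv; rewrite ?invgK. Qed.

Lemma in_interval_inv u v x :
  in_interval u v x -> in_interval (u^-1)%g (v^-1)%g (x^-1)%g.
Proof. by case=> le_ux le_xv; split; apply: bruhat_le_inv. Qed.

Definition w0 : 'S_n := perm (@rev_ord_inj n).

Lemma w0K : (w0 * w0 = 1)%g.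
Proof. by apply/permP => o; rewrite permM !permE rev_ordK. Qed.

Lemma w0V : (w0^-1)%g = w0.
Proof. by rewrite -[(w0^-1)%g]mulg1 -w0K mulgA mulVg mul1g. Qed.

Lemma invn_mul_w0 y a : a < n -> invn (y * w0)%g a = invn y (n - a.+1).
Proof.
move=> lt_an; rewrite (invnE _ (Ordinal lt_an)) invgM w0V permM [w0 _]permE.
by rewrite (invnE y (rev_ord (Ordinal lt_an))).
Qed.

Lemma tab_mul_w0 y k j : k <= n -> tab (y * w0)%g k j + tab y (n - k) j = tab y n j.
Proof.
elim: k => [|k IHk] le_kn; first by rewrite tab0 subn0.
rewrite -(IHk (ltnW le_kn)) (_ : n - k = (n - k.+1).+1); last by lia.
by rewrite !tabS invn_mul_w0 // le_kn (_ : n - k.+1 < n); lia.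
Qed.

Lemma tab_full y j : tab y n j = tab (1 : 'S_n) n j.
Proof.
rewrite /tab !big_mkord (reindex_inj (@perm_inj _ y)).
by apply: eq_bigr => o _; rewrite !ltn_ord invn1 (invnE y (y o)) permK.
Qed.

Lemma tab_ge y k j : n <= k -> tab y k j = tab y n j.
Proof.
move=> le_nk; rewrite -(subnKC le_nk); elim: (k - n) => [|m IHm]; first by rewrite addn0.
by rewrite addnS tabS IHm ltnNge leq_addr addn0.
Qed.

Lemma tab_le_mul_w0 y z : tab_le y z -> tab_le (z * w0)%g (y * w0)%g.
Proof.
move=> le_yz k j; have [le_kn|lt_nk] := leqP k n; last first.
  by rewrite !(tab_ge _ _ (ltnW lt_nk)) tab_full [leqRHS]tab_full.
have := tab_mul_w0 z j le_kn; have := tab_mul_w0 y j le_kn.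
have := le_yz (n - k) j; rewrite (tab_full y) (tab_full z); lia.
Qed.

Lemma bruhat_le_mul_w0E y z : bruhat_le (z * w0)%g (y * w0)%g <-> bruhat_le y z.
Proof.
rewrite !bruhatE; split=> [/tab_le_mul_w0|]; last exact: tab_le_mul_w0.
by rewrite -!mulgA w0K !mulg1.
Qed.

Definition twist x : 'S_n := ((x * w0)^-1)%g.
Definition untwist x : 'S_n := (x^-1 * w0)%g.

Lemma untwistK : cancel untwist twist.
Proof. by move=> x; rewrite /twist /untwist -mulgA w0K mulg1 invgK. Qed.

Lemma bruhat_le_twistE x y : bruhat_le (twist y) (twist x) <-> bruhat_le x y.
Proof. by rewrite bruhat_le_invE bruhat_le_mul_w0E. Qed.

Lemma in_interval_twistE u v x :
  in_interval (twist v) (twist u) (twist x) <-> in_interval u v x.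
Proof. by rewrite /in_interval !bruhat_le_twistE and_comm. Qed.

Lemma pipsi_twist d y : pipsi d (twist y) =1 piphi d y.
Proof.
move=> k; rewrite /pipsi /piphi /twist invgK permM [w0 _]permE /=.
by apply: eq_count => dj /=; have := ltn_ord (y k); lia.
Qed.

End Symmetries.

Section IntervalImages.
Variable n : nat.
Implicit Types (f g : 'S_n -> 'I_n -> nat) (x y u v : 'S_n).

Definition image_sub f g u v u' v' : Prop :=
  forall x, in_interval u v x -> exists2 y, in_interval u' v' y & f x =1 g y.

Definition fiber_min f v : Prop :=
  forall x, f x =1 f v -> bruhat_le x v -> x = v.

Lemma image_sub_refl f u v : image_sub f f u v u v.
Proof. by move=> x uvx; exists x. Qed.

Lemma image_sub_trans g f h u v u1 v1 u2 v2 :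
  image_sub f g u v u1 v1 -> image_sub g h u1 v1 u2 v2 -> image_sub f h u v u2 v2.
Proof.
move=> sub_fg sub_gh x /sub_fg[y /sub_gh[z uvz gz] fy].
by exists z => // k; rewrite fy gz.
Qed.

Lemma in_intervalE u v x : in_interval u v x <-> tab_le u x /\ tab_le x v.
Proof. by rewrite /in_interval !bruhatE. Qed.

Local Open Scope ring_scope.

Lemma conv_interval_sub (R : realType) f g u v u' v' :
  image_sub f g u v u' v' ->
  forall p, @conv_interval R n f u v p -> @conv_interval R n g u' v' p.
Proof.
move=> sub_fg p [lam [lam_ge0 lam_out lam_sum ->]].
have [c c_spec] : {c : 'S_n -> 'S_n &
    forall x, in_interval u v x -> in_interval u' v' (c x) /\ f x =1 g (c x)}.
  apply: (choice (P := fun x y =>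
    in_interval u v x -> in_interval u' v' y /\ f x =1 g y)) => x.
  have [/sub_fg[y uvy fy] | not_uvx] := pselect (in_interval u v x).
    by exists y.
  by exists x => /not_uvx.
have lam_in x : lam x != 0 -> in_interval u v x.
  by move=> /eqP lam_nz; have [//|/lam_out] := pselect (in_interval u v x).
exists (fun y => \sum_(x | c x == y) lam x); split.
- by move=> y; apply: sumr_ge0.
- move=> y uvy; apply: big1 => x /eqP cxy; apply/eqP; apply: contraT => /lam_in uvx.
  by case: uvy; rewrite -cxy; case: (c_spec x uvx).
- by rewrite -lam_sum [RHS](partition_big c xpredT).
rewrite [LHS](partition_big c xpredT) //=; apply: eq_bigr => y _.
rewrite scaler_suml; apply: eq_big => // x /eqP cxy.
have [->|/lam_in uvx] := eqVneq (lam x) 0; first by rewrite !scale0r.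
have [_ fx] := c_spec x uvx; congr (_ *: _).
by apply/rowP => k; rewrite !mxE fx cxy.
Qed.

Lemma conv_interval_eq (R : realType) f g u v u' v' :
  image_sub f g u v u' v' -> image_sub g f u' v' u v ->
  forall p, @conv_interval R n f u v p <-> @conv_interval R n g u' v' p.
Proof. by move=> sub_fg sub_gf p; split; apply: conv_interval_sub. Qed.

End IntervalImages.

Definition lvec (L : nat -> nat) {n : nat} (x : 'S_n) (k : 'I_n) : nat := L (x k).

Section FlatAscents.
Variables (n : nat) (L : nat -> nat).
Hypothesis L_mono : {homo L : a b / a <= b}.
Implicit Types (x y u v : 'S_n) (i : 'I_n).

(* For monotone L these are exactly the Bruhat-minimal elements of the fibers
   of [lvec L]. *)
Definition flat_asc x : Prop := forall i, i.+1 < n -> L i = L i.+1 -> asc x i.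

Lemma lvec_mul_adj x i : i.+1 < n -> L i = L i.+1 -> lvec L (x * adj i)%g =1 lvec L x.
Proof.
move=> lt_in eq_L k; rewrite /lvec permM adj_val // /swapn.
by case: eqP => [->|_]; [|case: eqP => [->|]].
Qed.

Lemma invn_flat_asc x a b :
  flat_asc x -> a < b -> b < n -> L a = L b -> invn x a < invn x b.
Proof.
move=> flat_x lt_ab; elim: b lt_ab => // b IHb lt_ab lt_bn eq_L.
have lt_b : b < n by lia.
have L_b : L b = L b.+1.
  by apply/eqP; rewrite eqn_leq L_mono //= -eq_L L_mono //; lia.
have := flat_x (Ordinal lt_b) lt_bn L_b; rewrite /asc /=.
have [-> //|ne_ab] := eqVneq a b.
by have := IHb (ltac:(lia)) lt_b (ltac:(lia)); lia.
Qed.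

Lemma leq_invn_flat_asc x v (m : 'I_n) :
  flat_asc v -> lvec L x =1 lvec L v ->
  (forall m' : nat, m' < m -> invn x m' = invn v m') -> invn v m <= invn x m.
Proof.
(* If x placed m earlier than v does, the value m2 that v places there lies in
   the L-block of m: m2 < m contradicts [eq_below], m2 > m contradicts the
   ascents of v inside that block. *)
move=> flat_v eq_xv eq_below; rewrite leqNgt !invnE; apply/negP => lt_m.
set kx := (x^-1)%g m in lt_m; set m2 := v kx.
have L_m2 : L m = L m2 by have := eq_xv kx; rewrite /lvec /kx permKV.
have ne_m2 : m2 != m.
  by apply: contraTneq lt_m => eq_m2; rewrite -eq_m2 /m2 permK ltnn.
have [lt_m2|gt_m2|/val_inj eq_m2] := ltngtP m2 m; last by rewrite eq_m2 eqxx in ne_m2.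
- move: (eq_below m2 lt_m2); rewrite !invnE /m2 permK => /val_inj/(congr1 x).
  by rewrite !permKV => eq_m; case/eqP: ne_m2.
- have := invn_flat_asc flat_v gt_m2 (ltn_ord m2) L_m2.
  by rewrite !invnE /m2 permK; lia.
Qed.

Lemma flat_asc_inj x v : flat_asc x -> flat_asc v -> lvec L x =1 lvec L v -> x = v.
Proof.
move=> flat_x flat_v eq_xv.
have eq_vx : lvec L v =1 lvec L x by move=> k; rewrite eq_xv.
suff eq_invn m : m < n -> invn x m = invn v m.
  by apply: invg_inj; apply/permP => o; apply/val_inj => /=; rewrite -!invnE eq_invn.
elim/ltn_ind: m => m IHm lt_mn; apply/eqP; rewrite eqn_leq.
have eq_below m' : m' < Ordinal lt_mn -> invn x m' = invn v m'.
  by move=> /= lt_m'; apply: IHm => //; lia.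
rewrite (leq_invn_flat_asc (m := Ordinal lt_mn) flat_v eq_xv eq_below) andbT.
by apply: (leq_invn_flat_asc (m := Ordinal lt_mn) flat_x eq_vx) => m' /eq_below ->.
Qed.

Lemma flat_ascP x :
  flat_asc x \/ exists i, [/\ i.+1 < n, L i = L i.+1 & ~~ asc x i].
Proof.
have [i /and3P[lt_in /eqP eq_L desc_x] | no_desc] :=
  pickP [pred i : 'I_n | [&& i.+1 < n, L i == L i.+1 & ~~ asc x i]].
  by right; exists i.
by left=> i lt_in eq_L; move: (no_desc i); rewrite /= lt_in eq_L eqxx => /negbFE.
Qed.

Lemma flat_asc_tab_le v x : flat_asc v -> lvec L x =1 lvec L v -> tab_le v x.
Proof.
move=> flat_v; have [k] := ubnP (ninv x); elim: k x => // k IHk x lt_xk eq_xv.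
have [flat_x | [i [lt_in eq_L desc_x]]] := flat_ascP x.
  by rewrite (flat_asc_inj flat_x flat_v eq_xv); exact: tab_le_refl.
apply: tab_le_trans (tab_le_mul_adjV lt_in desc_x); apply: IHk.
  by have := ninv_mul_adjV lt_in desc_x; lia.
by move=> k'; rewrite lvec_mul_adj.
Qed.

Lemma flat_asc_fiber_min v : flat_asc v -> fiber_min (lvec L) v.
Proof.
move=> flat_v x eq_xv /bruhatE le_xv.
exact: tab_le_anti le_xv (flat_asc_tab_le flat_v eq_xv).
Qed.

Section FlatDescent.
Variables (i : 'I_n) (v : 'S_n).
Hypotheses (lt_in : i.+1 < n) (eq_L : L i = L i.+1) (desc_v : ~~ asc v i).
Let s := adj i.
Let lvec_s x : lvec L (x * s)%g =1 lvec L x := lvec_mul_adj x lt_in eq_L.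

Lemma flat_descent_asc u : asc u i -> tab_le u v ->
  [/\ tab_le u (v * s)%g, image_sub (lvec L) (lvec L) u v u (v * s)%g
    & image_sub (lvec L) (lvec L) u (v * s)%g u v].
Proof.
move=> asc_u le_uv; split; first exact: tab_le_mul_adjr.
  move=> x /in_intervalE[le_ux le_xv]; have [asc_x | desc_x] := boolP (asc x i).
    by exists x => //; apply/in_intervalE; split=> //; exact: tab_le_mul_adjr.
  exists (x * s)%g => [|k]; last by rewrite lvec_s.
  by apply/in_intervalE; split; [exact: tab_le_mul_adjr | exact: tab_le_mul_adj_desc].
move=> y /in_intervalE[le_uy le_yvs]; exists y => //; apply/in_intervalE.
by split=> //; exact: tab_le_trans le_yvs (tab_le_mul_adjV lt_in desc_v).
Qed.

Lemma flat_descent_desc u : ~~ asc u i -> tab_le u v ->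
  [/\ tab_le (u * s)%g (v * s)%g,
     image_sub (lvec L) (lvec L) u v (u * s)%g (v * s)%g
   & image_sub (lvec L) (lvec L) (u * s)%g (v * s)%g u v].
Proof.
move=> desc_u le_uv; split; first exact: tab_le_mul_adj_desc.
  move=> x /in_intervalE[le_ux le_xv]; have [asc_x | desc_x] := boolP (asc x i).
    exists x => //; apply/in_intervalE; split; last exact: tab_le_mul_adjr.
    exact: tab_le_trans (tab_le_mul_adjV lt_in desc_u) le_ux.
  exists (x * s)%g => [|k]; last by rewrite lvec_s.
  by apply/in_intervalE; split; exact: tab_le_mul_adj_desc.
have asc_us : asc (u * s)%g i by rewrite asc_mul_adj.
move=> y /in_intervalE[le_usy le_yvs]; have [asc_y | desc_y] := boolP (asc y i).
  exists (y * s)%g => [|k]; last by rewrite lvec_s.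
  have asc_vs : asc (v * s)%g i by rewrite asc_mul_adj.
  apply/in_intervalE; rewrite -[u](mul_adjK u i) -[v](mul_adjK v i).
  split; [exact: (tab_le_mul_adj_asc lt_in asc_y le_usy) |
          exact: (tab_le_mul_adj_asc lt_in asc_vs le_yvs)].
exists y => //; apply/in_intervalE; split; last first.
  exact: tab_le_trans le_yvs (tab_le_mul_adjV lt_in desc_v).
have asc_ys : asc (y * s)%g i by rewrite asc_mul_adj.
rewrite -[u](mul_adjK u i) -[y](mul_adjK y i).
exact: (tab_le_mul_adj_asc lt_in asc_ys (tab_le_mul_adjr lt_in desc_y asc_us le_usy)).
Qed.

End FlatDescent.

Lemma exists_flat_asc_interval u v : bruhat_le u v -> exists u' v',
  [/\ bruhat_le u' v', flat_asc v', image_sub (lvec L) (lvec L) u v u' v'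
    & image_sub (lvec L) (lvec L) u' v' u v].
Proof.
move/bruhatE; have [k] := ubnP (ninv v); elim: k u v => // k IHk u v lt_vk le_uv.
have [flat_v | [i [lt_in eq_L desc_v]]] := flat_ascP v.
  by exists u, v; split=> //;
    [exact/bruhatE | exact: image_sub_refl | exact: image_sub_refl].
have lt_vsk : ninv (v * adj i)%g < k by have := ninv_mul_adjV lt_in desc_v; lia.
have [u2 [le_u2 sub_u2 sub_u2']] : exists u2, [/\ tab_le u2 (v * adj i)%g,
    image_sub (lvec L) (lvec L) u v u2 (v * adj i)%g
  & image_sub (lvec L) (lvec L) u2 (v * adj i)%g u v].
  have [asc_u | desc_u] := boolP (asc u i).
    by exists u; exact: flat_descent_asc.
  by exists (u * adj i)%g; exact: flat_descent_desc.
have [u' [v' [le_uv' flat_v' sub_u' sub_u'']]] := IHk _ _ lt_vsk le_u2.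
exists u', v'; split=> //; first exact: image_sub_trans sub_u2 sub_u'.
exact: image_sub_trans sub_u'' sub_u2'.
Qed.

End FlatAscents.

Section Polytopes.
Variables (n : nat) (d : seq nat).
Implicit Types (x y u v : 'S_n).

(* [piphi d] is [lvec Lphi] by definition. *)
Definition Lphi (m : nat) : nat := count (fun dj => n - dj <= m) d.
Definition Lpsi (m : nat) : nat := count (fun dj => dj <= m) d.

Lemma Lphi_mono : {homo Lphi : a b / a <= b}.
Proof. by move=> a b le_ab; apply: sub_count => dj /= /leq_trans; apply. Qed.

Lemma Lpsi_mono : {homo Lpsi : a b / a <= b}.
Proof. by move=> a b le_ab; apply: sub_count => dj /= /leq_trans; apply. Qed.

Lemma pipsiE x k : pipsi d x k = size d - lvec Lpsi (x^-1)%g k.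
Proof.
rewrite /pipsi /lvec /Lpsi -(count_predC (fun dj => dj <= (x^-1)%g k)) addKn.
by apply: eq_count => dj /=; rewrite ltnNge.
Qed.

Lemma eq_pipsiE x y :
  pipsi d x =1 pipsi d y <-> lvec Lpsi (x^-1)%g =1 lvec Lpsi (y^-1)%g.
Proof.
split=> eq_xy k; last by rewrite !pipsiE eq_xy.
move: (eq_xy k); rewrite !pipsiE /lvec /Lpsi.
by move/(congr1 (subn (size d))); rewrite !subKn ?count_size.
Qed.

Lemma piphi_normal_form u v : bruhat_le u v -> exists u' v',
  [/\ bruhat_le u' v', fiber_min (piphi d) v',
      image_sub (piphi d) (piphi d) u v u' v' & image_sub (piphi d) (piphi d) u' v' u v].
Proof.
case/(exists_flat_asc_interval Lphi) => [u' [v' [le_uv' flat_v' sub sub']]].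
by exists u', v'; split=> //; exact: (flat_asc_fiber_min Lphi_mono flat_v').
Qed.

Lemma pipsi_normal_form u v : bruhat_le u v -> exists u' v',
  [/\ bruhat_le u' v', fiber_min (pipsi d) v',
      image_sub (pipsi d) (pipsi d) u v u' v' & image_sub (pipsi d) (pipsi d) u' v' u v].
Proof.
have sub_inv (a b a' b' : 'S_n) : image_sub (lvec Lpsi) (lvec Lpsi) a b a' b' ->
    image_sub (pipsi d) (pipsi d) (a^-1)%g (b^-1)%g (a'^-1)%g (b'^-1)%g.
  move=> sub x /in_interval_inv; rewrite !invgK => /sub[y aby eq_xy].
    by exists (y^-1)%g; [exact: in_interval_inv | apply/eq_pipsiE; rewrite invgK].
move=> /bruhat_le_inv /(exists_flat_asc_interval Lpsi).
move=> [u1 [v1 [le_uv1 flat_v1 sub sub']]].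
exists (u1^-1)%g, (v1^-1)%g; split.
- exact: bruhat_le_inv.
- move=> x /eq_pipsiE; rewrite invgK => eq_x /bruhat_le_inv; rewrite invgK.
  by move/(flat_asc_fiber_min Lpsi_mono flat_v1 eq_x) <-; rewrite invgK.
- by have := sub_inv _ _ _ _ sub; rewrite !invgK.
- by have := sub_inv _ _ _ _ sub'; rewrite !invgK.
Qed.

Lemma image_sub_twist u v : image_sub (piphi d) (pipsi d) u v (twist v) (twist u).
Proof.
move=> x uvx; exists (twist x); first exact/in_interval_twistE.
by move=> k; rewrite pipsi_twist.
Qed.

Lemma image_sub_untwist u v : image_sub (pipsi d) (piphi d) (twist v) (twist u) u v.
Proof.
move=> y; rewrite -[y]untwistK => /in_interval_twistE uvy.
by exists (untwist y) => // k; rewrite pipsi_twist.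
Qed.

Lemma Q_eq_tQ (R : realType) u v : bruhat_le u v -> exists u' v',
  tBI d u' v' /\ (forall p : 'rV[R]_n, Q R d u v p <-> tQ R d u' v' p).
Proof.
move/bruhat_le_twistE/pipsi_normal_form => [u' [v' [le_uv' min_v' sub sub']]].
exists u', v'; split=> //; apply: conv_interval_eq.
  exact: (image_sub_trans (@image_sub_twist u v) sub).
exact: (image_sub_trans sub' (@image_sub_untwist u v)).
Qed.

Lemma tQ_eq_Q (R : realType) u v : bruhat_le u v -> exists u' v',
  BI d u' v' /\ (forall p : 'rV[R]_n, tQ R d u v p <-> Q R d u' v' p).
Proof.
rewrite -[u]untwistK -[v]untwistK.
move/bruhat_le_twistE/piphi_normal_form => [u' [v' [le_uv' min_v' sub sub']]].
exists u', v'; split=> //; apply: conv_interval_eq.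
  exact: (image_sub_trans (@image_sub_untwist _ _) sub).
exact: (image_sub_trans sub' (@image_sub_twist _ _)).
Qed.

End Polytopes.

Theorem theorem4p6 (R : realType) (n : nat) (d : seq nat) :
  1 <= n -> d != [::] -> sorted ltn d -> 1 <= head 0 d -> last 0 d <= n ->
  (forall u v : 'S_n, BI d u v ->
     exists u' v' : 'S_n, tBI d u' v' /\
       (forall p : 'rV[R]_n, Q R d u v p <-> tQ R d u' v' p)) /\
  (forall u v : 'S_n, tBI d u v ->
     exists u' v' : 'S_n, BI d u' v' /\
       (forall p : 'rV[R]_n, tQ R d u v p <-> Q R d u' v' p)).
Proof.
by move=> _ _ _ _ _; split=> u v [le_uv _]; [exact: Q_eq_tQ | exact: tQ_eq_Q].
Qed.
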